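(* Let $d\ge 1$ be an integer, let $P\subseteq \mathbb R\times[d]$, and let $\mathcal C_{\equiv}(P)$ be as in the context. For any finite family $\mathcal C\subseteq \mathcal C_{\equiv}(P)$, the nerve of $\mathcal C$ is $(2d-1)$-collapsible.
   Context: $[d]=\{1,\dots,d\}$. A (separated) $d$-interval is a set $I=\bigcup_{i\in[d]}\{(x,i)\in\mathbb R\times[d]: x\in I^{(i)}\}$, where each $I^{(i)}\subseteq\mathbb R$ is a convex set (possibly empty), called the $i$-th level of $I$. For $P\subseteq\mathbb R\times[d]$, $\mathcal C_{\equiv}(P)=\{I\cap P: I\subseteq\mathbb R\times[d]\text{ is a } d\text{-interval}\}$. For a family $\mathcal F=(C_i)_{i\in I}$ of sets indexed by a finite set $I$, its nerve is the abstract simplicial complex $K(\mathcal F)=\{J\subseteq I: \bigcap_{j\in J}C_j\neq\emptyset\}$. The dimension of a face $\alpha$ is $|\alpha|-1$. A face $\sigma$ of a simplicial complex $K$ is free if it is contained in a unique inclusion-maximal face of $K$. An elementary $d$-collapse removes from $K$ a free face $\sigma$ with $\dim\sigma\le d-1$ together with all faces containing it, giving $\mathrm{coll}(K,\sigma)=K\setminus\{\tau\in K:\sigma\subseteq\tau\}$. $K$ is $d$-collapsible if it can be reduced to the empty complex by a sequence of elementary $d$-collapses. *)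

From Stdlib Require Import Reals.
From mathcomp Require Import all_boot.
Set Implicit Arguments. Unset Strict Implicit. Unset Printing Implicit Defensive.

(* A point of R x [d]; the level set [d] = {1..d} is modelled by 'I_d = {0..d-1}. *)
Definition pt (d : nat) : Type := (R * 'I_d)%type.

Definition convex (S : R -> Prop) : Prop :=
  forall x y z, S x -> S y -> Rle x z -> Rle z y -> S z.

(* A (separated) d-interval given by its levels lvl i (each convex, possibly empty). *)
Definition d_interval_of (d : nat) (lvl : 'I_d -> R -> Prop) : pt d -> Prop :=
  fun p => lvl p.2 p.1.

Definition in_C_equiv (d : nat) (P : pt d -> Prop) (C : pt d -> Prop) : Prop :=
  exists lvl : 'I_d -> R -> Prop,
    (forall i, convex (lvl i)) /\
    (forall p, C p <-> (d_interval_of lvl p /\ P p)).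

Definition complex (I : finType) := {set I} -> Prop.

Definition nerve (I : finType) (X : Type) (C : I -> X -> Prop) : complex I :=
  fun J => exists x, forall j, j \in J -> C j x.

Definition maximal_face (I : finType) (K : complex I) (t : {set I}) : Prop :=
  K t /\ forall t', K t' -> t \subset t' -> t' = t.

Definition free_face (I : finType) (K : complex I) (s : {set I}) : Prop :=
  K s /\ exists t, [/\ maximal_face K t, s \subset t &
                      forall t', maximal_face K t' -> s \subset t' -> t' = t].

Definition coll (I : finType) (K : complex I) (s : {set I}) : complex I :=
  fun t => K t /\ ~ (s \subset t).

(* K is d-collapsible: reducible to the empty (void) complex by elementary
   d-collapses, i.e. removals of free faces sigma with dim sigma = |sigma|-1 <= d-1. *)
Inductive d_collapsible (I : finType) (d : nat) : complex I -> Prop :=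
| dcoll_empty (K : complex I) : (forall s, ~ K s) -> d_collapsible d K
| dcoll_step (K : complex I) (s : {set I}) :
    free_face K s -> #|s| <= d -> d_collapsible d (coll K s) -> d_collapsible d K.

From Stdlib Require Import Reals.
From mathcomp Require Import all_boot zify.
From mathcomp Require Import boolp Rstruct.

Set Implicit Arguments. Unset Strict Implicit. Unset Printing Implicit Defensive.

(* Only finitely many points matter: one witness per face of the nerve.  We then
   induct on the number of memberships p ∈ C_j.  Let x be the leftmost point used
   at some level l and, among the sets containing x, let C_i be one whose level-l
   part ends first; every set containing x then contains all of C_i at level l.
   Deleting x from C_i keeps every set a trace of a d-interval and deletes from the
   nerve exactly the faces J with i ∈ J ⊆ {j | x ∈ C_j} that meet every
   A_y = {j | y ∉ C_j}, y ∈ C_i \ {x}.  Such a family of faces is collapsed by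
   deciding one index at a time.  Grouping the A_y by the level of y, level l costs
   nothing beyond the face {i}, and every other level costs two more indices by the
   one-dimensional argument for intervals (order the intervals by their right ends),
   so all removed free faces have at most 1 + 2(d - 1) = 2d - 1 elements. *)

Section Blocks.
Variable I : finType.
Implicit Types (K : complex I) (H B : {set I} -> Prop) (r t u J : {set I}).

Lemma complex_ext K K' : (forall J, K J <-> K' J) -> K = K'.
Proof. by move=> KK'; apply/funext => J; apply/propext. Qed.

Definition cdiff K B : complex I := fun J => K J /\ ~ B J.

Lemma d_collapsible_cone k K r u : K r -> r \subset u ->
  (forall J, K J -> r \subset J -> J \subset u) -> K u -> #|r| <= k ->
  d_collapsible k (coll K r) -> d_collapsible k K.
Proof.
move=> Kr ru coneK Ku kr; apply: dcoll_step kr => //; split=> //.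
have max_u : maximal_face K u.
  by split=> // J KJ uJ; apply/eqP; rewrite eqEsubset uJ andbT coneK // (subset_trans ru uJ).
by exists u; split=> // J [KJ maxJ] rJ; rewrite (maxJ u Ku (coneK J KJ rJ)).
Qed.

Lemma d_collapsible_sub0 k K : (forall J, K J -> J = set0) -> d_collapsible k K.
Proof.
move=> K0; have [K_0 | nK_0] := pselect (K set0); last first.
  by apply: dcoll_empty => J KJ; apply: nK_0; rewrite -(K0 J KJ).
apply: (d_collapsible_cone K_0 (sub0set _) _ K_0); rewrite ?cards0 //.
  by move=> J /K0 ->.
by apply: dcoll_empty => J [/K0 -> []]; apply: sub0set.
Qed.

Definition transversal H J := forall A, H A -> ~~ [disjoint A & J].

Lemma transversalS H J J' : J \subset J' -> transversal H J -> transversal H J'.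
Proof. by move=> sJ tJ A /tJ; apply: contra; apply: disjointWr. Qed.

Definition block H r t J := [/\ r \subset J, J \subset r :|: t & transversal H J].

Inductive block_collapsible k H : {set I} -> {set I} -> Prop :=
| BlockVoid r t A of H A & [disjoint A & r :|: t] : block_collapsible k H r t
(* [BlockCone]: as [r] meets every member of [H], the block is the whole interval
   between [r] and [r :|: t], so it is removed by collapsing the free face [r]. *)
| BlockCone r t of transversal H r & #|r| <= k : block_collapsible k H r t
| BlockSplit r t a of a \in t & a \notin r &
    block_collapsible k H (a |: r) (t :\ a) & block_collapsible k H r (t :\ a) :
    block_collapsible k H r t.

Lemma setU1D1 r t a : a \in t -> (a |: r) :|: (t :\ a) = r :|: t.
Proof. by move=> at_; apply/setP => x; rewrite !inE; case: eqP => // ->; rewrite at_ orbT. Qed.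

Lemma disjointU1D1 r t a : [disjoint r & t] -> [disjoint a |: r & t :\ a].
Proof.
move=> drt; apply/pred0P => x /=; rewrite !inE.
case: eqP => //= _; apply/negbTE; rewrite negb_and; apply/orP.
by case xr: (x \in r); [right; rewrite (disjointFr drt xr) | left].
Qed.

Lemma block_split H r t a J : a \in t -> a \notin r ->
  block H r t J <-> block H (a |: r) (t :\ a) J \/ block H r (t :\ a) J.
Proof.
move=> at_ ar; split=> [[rJ Jrt tJ] | [[arJ Jrt tJ] | [rJ Jrt tJ]]].
- case aJ: (a \in J); [left | right]; split=> //.
  + by rewrite subUset sub1set aJ.
  + by rewrite setU1D1.
  + apply/subsetP => x xJ; move/subsetP: Jrt => /(_ x xJ); rewrite !inE.
    by case: eqP => // xa; rewrite -xa xJ in aJ.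
- by split=> //; [exact: subset_trans (subsetUr _ _) arJ | rewrite -(setU1D1 r at_)].
- by split=> //; apply: subset_trans Jrt _; apply: setUS; apply: subsetDl.
Qed.

Lemma collapsible_block k H r t K :
  block_collapsible k H r t ->
  (forall J, block H r t J -> K J) ->
  (forall J J', block H r t J -> J \subset J' -> K J' -> block H r t J') ->
  d_collapsible k (cdiff K (block H r t)) -> d_collapsible k K.
Proof.
move=> bc; elim: bc K => {r t} [r t A HA dA | r t tr kr | r t a at_ ar _ IH1 _ IH2] K BK upB.
- suff -> : cdiff K (block H r t) = K by [].
  apply: complex_ext => J; split=> [[]//|KJ]; split=> // -[_ sJ /(_ A HA)].
  by rewrite (disjointWr sJ dA).
- have Br : block H r t r by split; rewrite ?subxx ?subsetUl.
  have Brt : block H r t (r :|: t).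
    by split; rewrite ?subxx ?subsetUl //; apply: transversalS tr; apply: subsetUl.
  move=> cK; apply: (d_collapsible_cone (BK _ Br) (subsetUl r t) _ (BK _ Brt) kr).
    by move=> J KJ rJ; case: (upB _ _ Br rJ KJ).
  suff -> : coll K r = cdiff K (block H r t) by [].
  apply: complex_ext => J; split=> -[KJ nJ]; split=> //; first by case.
  by move=> rJ; apply: nJ; apply: upB Br rJ KJ.
- have B1a J : block H (a |: r) (t :\ a) J -> a \in J.
    by case=> /subsetP/(_ a (setU11 a r)).
  have B2a J : block H r (t :\ a) J -> a \notin J.
    by case=> _ /subsetP sJ _; apply/negP => /sJ; rewrite !inE eqxx (negbTE ar).
  have BE J := block_split H J at_ ar.
  move=> cK; apply: IH1 => [J B1J | J J' B1J sJ KJ' |].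
  + by apply: BK; apply/BE; left.
  + case/BE: (upB J J' (proj2 (BE J) (or_introl B1J)) sJ KJ') => // B2J'.
    by move: (B2a _ B2J'); rewrite (subsetP sJ _ (B1a _ B1J)).
  + apply: IH2 => [J B2J | J J' B2J sJ [KJ' nB1J'] |].
    * split; first by apply: BK; apply/BE; right.
      by move/B1a; apply/negP; apply: B2a.
    * by case/BE: (upB J J' (proj2 (BE J) (or_intror B2J)) sJ KJ').
    * suff <- : cdiff K (block H r t) =
          cdiff (cdiff K (block H (a |: r) (t :\ a))) (block H r (t :\ a)) by [].
      by apply: complex_ext => J; have := BE J; rewrite /cdiff; tauto.
Qed.

Lemma block_collapsibleW k k' H r t :
  k <= k' -> block_collapsible k H r t -> block_collapsible k' H r t.
Proof.
move=> kk'; elim=> {r t} [r t A HA dA | r t tr kr | r t a at_ ar _ IH1 _ IH2].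
- exact: BlockVoid HA dA.
- by apply: BlockCone tr _; apply: leq_trans kr kk'.
- exact: BlockSplit at_ ar IH1 IH2.
Qed.

Lemma eq_block_collapsible k H H' r t : (forall A, H A <-> H' A) ->
  block_collapsible k H r t -> block_collapsible k H' r t.
Proof. by move=> HH'; have -> // : H = H' by apply/funext => A; apply/propext. Qed.

Lemma block_collapsibleS k H r t t' :
  t' \subset t -> block_collapsible k H r t -> block_collapsible k H r t'.
Proof.
move=> + bc; elim: bc t' => {r t} [r t A HA dA | r t tr kr | r t a at_ ar _ IH1 _ IH2] t' st'.
- by apply: BlockVoid HA _; apply: disjointWr dA; apply: setUS.
- exact: BlockCone.
- case at': (a \in t').
  + by apply: BlockSplit at' ar (IH1 _ _) (IH2 _ _); apply: setSD.
  + apply: IH2; apply/subsetP => x xt'; rewrite !inE (subsetP st' x xt') andbT.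
    by apply: contraTneq xt' => ->; rewrite at'.
Qed.

Lemma block_collapsible_add k H r t a : a \in t -> a \notin r ->
  block_collapsible k H r t -> block_collapsible k.+1 H (a |: r) (t :\ a).
Proof.
move=> + + bc; elim: bc a => {r t} [r t A HA dA | r t tr kr | r t b bt br bc1 IH1 _ IH2] a at_ ar.
- by apply: BlockVoid HA _; rewrite setU1D1.
- apply: BlockCone; first exact: transversalS (subsetUr _ _) tr.
  by rewrite cardsU1 ar.
- have [<- | ba] := eqVneq b a; first exact: block_collapsibleW bc1.
  have ab : a != b by rewrite eq_sym.
  have atb : a \in t :\ b by rewrite !inE ab at_.
  have swap : t :\ a :\ b = t :\ b :\ a by rewrite !setDDl setUC.
  apply: (@BlockSplit _ _ _ _ b); rewrite ?inE ?bt ?ba ?negb_or ?br ?andbT //.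
  + by rewrite setUCA swap; apply: IH1; rewrite // !inE negb_or ab.
  + by rewrite swap; apply: IH2.
Qed.

Lemma block_collapsibleUl k H1 H2 r t : transversal H1 r ->
  block_collapsible k H2 r t -> block_collapsible k (fun A => H1 A \/ H2 A) r t.
Proof.
move=> + bc; elim: bc => {r t} [r t A HA dA | r t tr kr | r t a at_ ar _ IH1 _ IH2] tr1.
- exact: (@BlockVoid _ _ _ _ A (or_intror HA) dA).
- by apply: BlockCone kr => A [/tr1 | /tr].
- apply: BlockSplit at_ ar (IH1 _) (IH2 tr1).
  exact: transversalS (subsetUr _ _) tr1.
Qed.

Lemma block_collapsibleU k1 k2 k H1 H2 r t :
  [disjoint r & t] -> k1 + k2 <= k + #|r| ->
  block_collapsible k1 H1 r t -> block_collapsible k2 H2 r t ->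
  block_collapsible k (fun A => H1 A \/ H2 A) r t.
Proof.
move=> + + bc1; elim: bc1 k2 k => {r t} [r t A HA dA | r t tr kr | r t a at_ ar _ IH1 _ IH2]
  k2 k drt kk bc2.
- exact: (@BlockVoid _ _ _ _ A (or_introl HA) dA).
- by apply: block_collapsibleUl tr _; apply: block_collapsibleW bc2; lia.
- apply: (BlockSplit at_ ar (IH1 k2.+1 _ _ _ _) (IH2 k2 _ _ kk _)).
  + exact: disjointU1D1.
  + by rewrite cardsU1 ar; lia.
  + exact: block_collapsible_add.
  + by apply: disjointWr drt; apply: subsetDl.
  + exact: block_collapsibleS (subsetDl _ _) bc2.
Qed.

Lemma block_collapsible_bigU (T : finType) (Hs : T -> {set I} -> Prop) (c : T -> nat) r t :
  [disjoint r & t] -> (forall m, block_collapsible (#|r| + c m) (Hs m) r t) ->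
  block_collapsible (#|r| + \sum_m c m) (fun A => exists m, Hs m A) r t.
Proof.
move=> drt bcH.
suff /(_ (enum T)) : forall s : seq T, block_collapsible (#|r| + \sum_(m <- s) c m)
    (fun A => exists2 m, m \in s & Hs m A) r t.
  rewrite big_enum; apply: eq_block_collapsible => A.
  by split=> [[m _ HA] | [m HA]]; exists m; rewrite ?mem_enum.
elim=> [|m s IH]; first by rewrite big_nil addn0; apply: BlockCone => // A [].
rewrite big_cons; apply: eq_block_collapsible (block_collapsibleU drt _ (bcH m) IH) => [A|].
- split=> [[HA | [m' m's HA]] | [m' /predU1P [-> | m's] HA]].
  + by exists m; rewrite ?mem_head.
  + by exists m'; rewrite // in_cons m's orbT.
  + by left.
  + by right; exists m'.
- lia.
Qed.

Definition avoiders (X : Type) (C : I -> X -> Prop) (y : X) : {set I} :=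
  [set j | `[< ~ C j y >]].

Lemma avoidersP X (C : I -> X -> Prop) y j : reflect (~ C j y) (j \in avoiders C y).
Proof. by rewrite inE; apply: asboolP. Qed.

Definition avoider_sets (X : Type) (C : I -> X -> Prop) (Y : X -> Prop) A : Prop :=
  exists2 y, Y y & A = avoiders C y.

Lemma transversal_avoiders X (C : I -> X -> Prop) Y J :
  transversal (avoider_sets C Y) J <-> ~ exists2 y, Y y & forall j, j \in J -> C j y.
Proof.
split=> [tJ [y Yy CJy] | nY A [y Yy ->]].
- have : ~~ [disjoint avoiders C y & J] by apply: tJ; exists y.
  by case/pred0Pn => j /andP [/avoidersP nC /CJy].
- apply/negP => /pred0P dJ; apply: nY; exists y => // j jJ; apply: contrapT => nC.
  by have := dJ j; rewrite /= jJ andbT => /avoidersP.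
Qed.

Lemma block_collapsible_common_point k X (C : I -> X -> Prop) Y r t y :
  Y y -> (forall j, j \in r :|: t -> C j y) -> block_collapsible k (avoider_sets C Y) r t.
Proof.
move=> Yy Cy; apply: (@BlockVoid _ _ _ _ (avoiders C y)); first by exists y.
apply/pred0P => j /=; case: (boolP (j \in r :|: t)) => [/Cy Cjy | _]; last by rewrite andbF.
by rewrite andbT; apply/negbTE/negP => /avoidersP.
Qed.

End Blocks.

Definition ends_before (X Y : R -> Prop) := forall y, X y -> exists2 z, Y z & Rle y z.

Lemma ends_before_trans X Y Z : ends_before X Y -> ends_before Y Z -> ends_before X Z.
Proof.
move=> XY YZ y /XY [z /YZ [z' Zz' le_zz'] le_yz]; exists z' => //.
exact: Rle_trans le_yz le_zz'.
Qed.

Lemma ends_before_total X Y : ends_before X Y \/ ends_before Y X.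
Proof.
have [|nXY] := pselect (ends_before X Y); [by left | right].
move=> z Yz; apply: contrapT => nz; apply: nXY => y Xy; exists z => //.
by apply: Rnot_lt_le => lt_zy; apply: nz; exists y => //; apply: Rlt_le.
Qed.

Lemma seq_min (T : eqType) (le : T -> T -> Prop) (s : seq T) x :
  (forall a b, le a b \/ le b a) -> (forall a b c, le a b -> le b c -> le a c) ->
  x \in s -> exists2 a, a \in s & forall b, b \in s -> le a b.
Proof.
move=> total trans; elim: s x => // y s IH x _.
have le_yy : le y y by case: (total y y).
case: s IH => [_ | z s IH]; first by exists y; rewrite ?mem_head // => b /predU1P [-> | ].
have [a as_ min_a] := IH z (mem_head z s).
have [le_ya | le_ay] := total y a.
- exists y; first exact: mem_head.
  by move=> b /predU1P [-> // | /min_a]; apply: trans le_ya.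
- exists a; first by rewrite in_cons as_ orbT.
  by move=> b /predU1P [-> | /min_a].
Qed.

Lemma upper_bound_witnesses (T : eqType) (P : R -> Prop) (Q : T -> R -> Prop) (s : seq T) y0 :
  P y0 -> (forall a, a \in s -> exists2 y, P y & Q a y) ->
  exists2 ys, P ys & forall a, a \in s -> exists y, [/\ P y, Q a y & Rle y ys].
Proof.
move=> Py0; elim: s => [_ | b s IH wit]; first by exists y0.
have [ys Pys hys] : exists2 ys, P ys & forall a, a \in s -> exists y, [/\ P y, Q a y & Rle y ys].
  by apply: IH => a sa; apply: wit; rewrite in_cons sa orbT.
have [yb Pyb Qyb] := wit b (mem_head b s).
have [le_yb | lt_ys] := Rle_or_lt yb ys.
- by exists ys => // a /predU1P [-> | /hys //]; exists yb.
- exists yb => // a /predU1P [-> | /hys [y [Py Qy le_y]]].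
    by exists yb; split=> //; apply: Rle_refl.
  by exists y; split=> //; apply: Rle_trans le_y (Rlt_le _ _ lt_ys).
Qed.

Section OneLevel.
Variables (I : finType) (D : I -> R -> Prop) (Y : R -> Prop).

Definition common (r : {set I}) y := Y y /\ forall j, j \in r -> D j y.

Lemma avoiders_collapsible_nested (r t : {set I}) : [disjoint r & t] ->
  (forall j y y', j \in t -> common r y -> common r y' -> Rle y y' -> D j y -> D j y') ->
  block_collapsible #|r|.+1 (avoider_sets D Y) r t.
Proof.
have [n] := ubnP #|t|; elim: n t => // n IH t /ltnSE le_tn drt nested.
have [[y0 Ey0] | nE] := pselect (exists y, common r y); last first.
  by apply: BlockCone => //; apply/transversal_avoiders => -[y Yy Dy]; apply: nE; exists y.
have [[a at_ nDa] | allD] := pselect (exists2 a, a \in t & forall y, common r y -> ~ D a y).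
- have ar : a \notin r by rewrite (disjointFl drt at_).
  apply: (BlockSplit at_ ar).
  + apply: BlockCone; last by rewrite cardsU1 ar.
    apply/transversal_avoiders => -[y Yy Dy]; apply: (nDa y); last by apply: Dy; rewrite setU11.
    by split=> // j jr; apply: Dy; rewrite inE jr orbT.
  + apply: IH; first by move: le_tn; rewrite (cardsD1 a t) at_.
    * by apply: disjointWr drt; apply: subsetDl.
    * by move=> j y y' /setD1P [_]; apply: nested.
- have wit a : a \in enum t -> exists2 y, common r y & D a y.
    rewrite mem_enum => at_; apply: contrapT => nwit; apply: allD.
    by exists a => // y Ey Day; apply: nwit; exists y.
  have [ys [Yys Dys] hys] := upper_bound_witnesses Ey0 wit.
  apply: (block_collapsible_common_point _ Yys) => j /setUP [/Dys // | jt].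
  have /hys [y [Ey Djy le_y]] : j \in enum t by rewrite mem_enum.
  exact: nested jt Ey (conj Yys Dys) le_y Djy.
Qed.

Lemma avoiders_collapsible_convex (r t : {set I}) : (forall j, convex (D j)) ->
  [disjoint r & t] -> block_collapsible #|r|.+2 (avoider_sets D Y) r t.
Proof.
move=> convD; have [n] := ubnP #|t|; elim: n t => // n IH t /ltnSE le_tn drt.
have [t0 | [a0 a0t]] := set_0Vmem t.
  apply: block_collapsibleW (leqnSn _) _.
  by apply: avoiders_collapsible_nested => // j y y'; rewrite t0 inE.
pose part j y := common r y /\ D j y.
have a0t' : a0 \in enum t by rewrite mem_enum.
have [a /[!mem_enum] at_ first] := seq_min (le := fun a b => ends_before (part a) (part b))
  (fun a b => ends_before_total _ _) (fun a b c => @ends_before_trans _ _ _) a0t'.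
have ar : a \notin r by rewrite (disjointFl drt at_).
apply: (BlockSplit at_ ar).
- have -> : #|r|.+2 = #|a |: r|.+1 by rewrite cardsU1 ar.
  apply: avoiders_collapsible_nested; first exact: disjointU1D1.
  move=> j y y' /setD1P [_ jt] _ [Yy' Dy'] le_yy' Djy.
  have Ey' : part a y'.
    by split; [split=> // i ir; apply: Dy'; rewrite inE ir orbT | apply: Dy'; rewrite setU11].
  have [z [_ Djz] le_y'z] : exists2 z, part j z & Rle y' z by apply: first; rewrite ?mem_enum.
  exact: convD j y z y' Djy Djz le_yy' le_y'z.
- apply: IH; first by move: le_tn; rewrite (cardsD1 a t) at_.
  by apply: disjointWr drt; apply: subsetDl.
Qed.

End OneLevel.

Definition members (I : finType) (X : Type) (C : I -> X -> Prop) (y : X) : {set I} :=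
  [set j | `[< C j y >]].

Lemma membersP (I : finType) X (C : I -> X -> Prop) y j : reflect (C j y) (j \in members C y).
Proof. by rewrite inE; apply: asboolP. Qed.

Section RemoveMembership.
Variables (I : finType) (X : Type) (C : I -> X -> Prop) (i : I) (x : X).
Hypothesis Cix : C i x.

Definition other_points y := C i y /\ y <> x.

Definition removal_block := block (avoider_sets C other_points) [set i] (members C x :\ i).

Lemma removal_blockP J : removal_block J <->
  [/\ i \in J, forall j, j \in J -> C j x &
      ~ exists2 y, other_points y & forall j, j \in J -> C j y].
Proof.
rewrite /removal_block /block setD1K; last exact/membersP.
split=> [[iJ Jx tJ] | [iJ Jx nY]]; (split; last exact/transversal_avoiders).
- by rewrite sub1set in iJ.
- by move=> j /(subsetP Jx) /membersP.
- by rewrite sub1set.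
- by apply/subsetP => j /Jx /membersP.
Qed.

Lemma nerve_remove_membership (C' : I -> X -> Prop) :
  (forall j y, C' j y <-> C j y /\ (j, y) <> (i, x)) ->
  nerve C' = cdiff (nerve C) removal_block.
Proof.
move=> C'E; apply: complex_ext => J; split=> [[w C'w] | [[w Cw] nB]].
- split; first by exists w => j /C'w /C'E [].
  case/removal_blockP => iJ _; apply; exists w => [|j /C'w /C'E []//].
  by have /C'E [Ciw ne] := C'w i iJ; split=> // wx; apply: ne; rewrite wx.
- have [[iJ wx] | nwx] := pselect (i \in J /\ w = x).
    have [y [Ciy yx] CJy] : exists2 y, other_points y & forall j, j \in J -> C j y.
      apply: contrapT => nY; apply: nB; apply/removal_blockP.
      by split=> // j; rewrite -wx; apply: Cw.
    by exists y => j jJ; apply/C'E; split; [exact: CJy | case=> _ /yx].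
  exists w => j jJ; apply/C'E; split; first exact: Cw.
  by case=> ji wx; apply: nwx; rewrite -ji.
Qed.

Lemma removal_block_up (J J' : {set I}) :
  removal_block J -> J \subset J' -> nerve C J' -> removal_block J'.
Proof.
case/removal_blockP => iJ _ nY sJ [w Cw].
have CJw j : j \in J -> C j w by move=> jJ; apply: Cw; apply: (subsetP sJ).
have wx : w = x by apply: contrapT => wx; apply: nY; exists w => //; split=> //; apply: CJw.
apply/removal_blockP; split; [exact: (subsetP sJ) | by rewrite -wx |].
by case=> y Yy CJ'y; apply: nY; exists y => // j /(subsetP sJ); apply: CJ'y.
Qed.

Lemma collapsible_remove_membership k (C' : I -> X -> Prop) :
  (forall j y, C' j y <-> C j y /\ (j, y) <> (i, x)) ->
  block_collapsible k (avoider_sets C other_points) [set i] (members C x :\ i) ->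
  d_collapsible k (nerve C') -> d_collapsible k (nerve C).
Proof.
move=> /nerve_remove_membership -> bc; apply: (collapsible_block bc) => [J | ].
  by case/removal_blockP => _ Jx _; exists x.
exact: removal_block_up.
Qed.

End RemoveMembership.

Section TracesOfDIntervals.
Variables (d : nat) (P : pt d -> Prop).
Implicit Types (C : pt d -> Prop) (x y z : pt d).

Lemma eq_in_C_equiv C C' : (forall p, C p <-> C' p) -> in_C_equiv P C -> in_C_equiv P C'.
Proof. by move=> CC' [lvl [cvx Ceq]]; exists lvl; split=> // p; rewrite -CC'. Qed.

Lemma in_C_equiv_restrict (Q : pt d -> Prop) C :
  in_C_equiv P C -> in_C_equiv (fun p => P p /\ Q p) (fun p => C p /\ Q p).
Proof. by case=> lvl [cvx Ceq]; exists lvl; split=> // p; rewrite Ceq; tauto. Qed.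

Lemma in_C_equiv_sub C p : in_C_equiv P C -> C p -> P p.
Proof. by case=> lvl [_ Ceq] /Ceq []. Qed.

Lemma in_C_equiv_between C x y z : in_C_equiv P C -> C x -> C z -> P y ->
  x.2 = y.2 -> z.2 = y.2 -> Rle x.1 y.1 -> Rle y.1 z.1 -> C y.
Proof.
case=> lvl [cvx Ceq] /Ceq [lx _] /Ceq [lz _] Py xy zy le_xy le_yz.
apply/Ceq; split=> //; rewrite /d_interval_of xy in lx; rewrite /d_interval_of zy in lz.
exact: cvx _ _ _ _ lx lz le_xy le_yz.
Qed.

Lemma in_C_equiv_remove_leftmost C x : in_C_equiv P C ->
  (forall y, C y -> y.2 = x.2 -> Rle x.1 y.1) -> in_C_equiv P (fun y => C y /\ y <> x).
Proof.
case=> lvl [cvx Ceq] leftmost.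
exists (fun m r => lvl m r /\ (m = x.2 -> Rlt x.1 r)); split.
  move=> m a b c [la lt_a] [lb _] le_ac le_cb; split; first exact: cvx m a b c la lb le_ac le_cb.
  by move=> mx; apply: Rlt_le_trans (lt_a mx) le_ac.
move=> [r m]; rewrite /d_interval_of /=; split.
- move=> [Crm ne]; have [lr Prm] := proj1 (Ceq (r, m)) Crm; split=> //; split=> // mx.
  case/Rle_lt_or_eq: (leftmost _ Crm mx) => // xr; case: ne.
  by rewrite /= in xr mx; rewrite -xr mx -surjective_pairing.
- move=> [[lr lt_r] Prm]; split; first exact/Ceq.
  by move=> e; move: lt_r; rewrite -e => /(_ erefl); apply: Rlt_irrefl.
Qed.

End TracesOfDIntervals.

Section RemovalBound.
Variables (d : nat) (P : pt d -> Prop) (I : finType) (C : I -> pt d -> Prop) (i : I) (x : pt d).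
Hypotheses (CP : forall j, in_C_equiv P (C j)) (Cix : C i x).
Hypothesis x_leftmost : forall y, C i y -> y.2 = x.2 -> Rle x.1 y.1.
Hypothesis i_ends_first :
  forall j, C j x -> ends_before (fun r => C i (r, x.2)) (fun r => C j (r, x.2)).

Lemma members_contain_level j y : C j x -> C i y -> y.2 = x.2 -> C j y.
Proof.
move=> Cjx Ciy yx.
have [z Cjz le_yz] : exists2 z, C j (z, x.2) & Rle y.1 z.
  by apply: i_ends_first => //; rewrite -yx -surjective_pairing.
apply: (in_C_equiv_between (CP j) Cjx Cjz) => //=; rewrite ?yx //.
- exact: in_C_equiv_sub (CP i) Ciy.
- exact: x_leftmost.
Qed.

Lemma removal_block_collapsible :
  block_collapsible (2 * d - 1) (avoider_sets C (other_points C i x)) [set i] (members C x :\ i).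
Proof.
have [lvl lvlP] := choice CP.
pose c m := if m == x.2 then 0 else 2.
have dix : [disjoint [set i] & members C x :\ i] by rewrite disjoints1 !inE eqxx.
have -> : 2 * d - 1 = #|[set i]| + \sum_m c m.
  rewrite cards1 (bigD1 x.2) //= {1}/c eqxx add0n.
  rewrite (eq_bigr (fun _ => 2)) => [|m /negbTE]; last by rewrite /c => ->.
  by rewrite sum_nat_const cardC1 card_ord; have := ltn_ord x.2; lia.
pose level_points m y := other_points C i x y /\ y.2 = m.
apply: eq_block_collapsible
  (block_collapsible_bigU (Hs := fun m => avoider_sets C (level_points m)) dix _) => [A | m].
  by split=> [[m [y [Yy _] ->]] | [y Yy ->]]; [exists y | exists y.2; exists y].
rewrite /c; case: eqP => [-> | /eqP mx].
- rewrite cards1 addn0.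
  have [[y Yy] | nY] := pselect (exists y, level_points x.2 y).
    apply: (block_collapsible_common_point _ Yy) => j; rewrite setD1K; last exact/membersP.
    by case: Yy => -[Ciy _] yx /membersP Cjx; apply: members_contain_level.
  apply: BlockCone; last by rewrite cards1.
  by apply/transversal_avoiders => -[y Yy _]; apply: nY; exists y.
- pose Ym r := other_points C i x (r, m).
  have avoidersE r : C i (r, m) -> avoiders C (r, m) = avoiders (fun j => lvl j m) r.
    move=> Cir; apply/setP => j; have Prm := in_C_equiv_sub (CP i) Cir.
    have CjE : C j (r, m) <-> lvl j m r by rewrite (proj2 (lvlP j)) /d_interval_of /=; tauto.
    by apply/avoidersP/avoidersP => nC /CjE.
  rewrite addn2; apply: eq_block_collapsible
    (avoiders_collapsible_convex Ym (fun j => proj1 (lvlP j) m) dix).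
  split=> [[r [Cir rx] ->] | [y [[Ciy yx] ym] ->]].
    by exists (r, m); [split | rewrite avoidersE].
  have yE : y = (y.1, m) by rewrite -ym -surjective_pairing.
  by exists y.1; [split; rewrite -yE | rewrite yE avoidersE -?yE].
Qed.

End RemovalBound.

Section Memberships.
Variables (I : finType) (X : eqType).
Implicit Types (L : seq (I * X)) (C : I -> X -> Prop).

Definition fam L (j : I) (p : X) : Prop := (j, p) \in L.

Lemma fam_filter L q j p : fam [seq q' <- L | q' != q] j p <-> fam L j p /\ (j, p) <> q.
Proof. by rewrite /fam mem_filter; split=> [/andP [/eqP ? ?] | [? /eqP ?]] //; apply/andP. Qed.

Lemma nerve_witnesses C (x0 : X) : exists (Q : X -> Prop) L,
  (forall j p, fam L j p <-> C j p /\ Q p) /\ nerve C = nerve (fam L).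
Proof.
have [wit witP] : {wit : {set I} -> X & forall J, nerve C J -> forall j, j \in J -> C j (wit J)}.
  apply: (@choice _ _ (fun J w => nerve C J -> forall j, j \in J -> C j w)) => J.
  by have [[w Cw] | nJ] := pselect (nerve C J); [exists w | exists x0].
pose L := [seq q <- [seq (j, wit J) | j <- enum I, J <- enum {set I}] | `[< C q.1 q.2 >]].
have famL j p : fam L j p <-> C j p /\ exists J, p = wit J.
  rewrite /fam mem_filter.
  split=> [/andP [/asboolP Cjp /allpairsP [[j' J] [_ _ [_ eJ]]]] | [Cjp [J eJ]]].
    by split=> //; exists J.
  apply/andP; split; first exact/asboolP.
  by apply/allpairsP; exists (j, J); rewrite !mem_enum eJ.
exists (fun p => exists J, p = wit J), L; split=> //.
apply: complex_ext => J; split=> [NJ | [w Lw]].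
  by exists (wit J) => j jJ; apply/famL; split; [exact: witP | exists J].
by exists w => j /Lw /famL [].
Qed.

End Memberships.

Lemma size_filter_neq (T : eqType) (s : seq T) a :
  a \in s -> size [seq b <- s | b != a] < size s.
Proof.
move=> as_; rewrite size_filter -(count_predC (pred1 a)) -[X in X < _]add0n ltn_add2r.
by rewrite -has_count has_pred1.
Qed.

Lemma in_C_equiv_fam_remove d (P : pt d -> Prop) (I : finType) (L : seq (I * pt d)) i x :
  (forall j, in_C_equiv P (fam L j)) -> (forall j y, fam L j y -> y.2 = x.2 -> Rle x.1 y.1) ->
  forall j, in_C_equiv P (fam [seq q <- L | q != (i, x)] j).
Proof.
move=> famP x_leftmost j; apply: eq_in_C_equiv (fun p => iff_sym (fam_filter L (i, x) j p)) _.
have [-> | ji] := eqVneq j i.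
  apply: eq_in_C_equiv (in_C_equiv_remove_leftmost (famP i) (x_leftmost i)) => y.
  split=> -[Liy ne]; split=> //; first by case.
  by move=> yx; apply: ne; rewrite yx.
apply: eq_in_C_equiv (famP j) => y; split=> [Ljy | []] //; split=> // -[/eqP].
by rewrite (negbTE ji).
Qed.

Lemma fam_collapsible d (P : pt d -> Prop) (I : finType) (L : seq (I * pt d)) :
  (forall j, in_C_equiv P (fam L j)) -> d_collapsible (2 * d - 1) (nerve (fam L)).
Proof.
have [n] := ubnP (size L); elim: n L => // n IH L /ltnSE le_Ln famP.
case: L le_Ln famP => [_ _ | q0 L0 le_Ln famP].
  apply: d_collapsible_sub0 => J [w Jw]; apply/setP => j.
  by rewrite inE; apply/negbTE/negP => /Jw.
set L := q0 :: L0.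
have Rle_total a b : Rle a b \/ Rle b a by case: (Rle_or_lt a b) => [|/Rlt_le]; [left | right].
have q0l : q0 \in [seq q <- L | q.2.2 == q0.2.2] by rewrite mem_filter eqxx mem_head.
(* [x] is leftmost among all memberships at its level, hence in every set containing it. *)
have [[i0 x] /[!mem_filter] /andP [/eqP xl i0x] x_min] :=
  seq_min (le := fun q q' : I * pt d => Rle q.2.1 q'.2.1)
    (fun q q' => Rle_total _ _) (fun q q' q'' => @Rle_trans _ _ _) q0l.
have x_leftmost j y : fam L j y -> y.2 = x.2 -> Rle x.1 y.1.
  by move=> jy yx; apply: (x_min (j, y)); rewrite mem_filter /= yx xl eqxx.
have i0s : i0 \in [seq j <- enum I | (j, x) \in L] by rewrite mem_filter mem_enum i0x.
have [i /[!mem_filter] /andP [ix _] i_first] :=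
  seq_min (le := fun j j' => ends_before (fun r => fam L j (r, x.2)) (fun r => fam L j' (r, x.2)))
    (fun _ _ => ends_before_total _ _) (fun _ _ _ => @ends_before_trans _ _ _) i0s.
apply: (collapsible_remove_membership ix (fam_filter L (i, x))).
  apply: (removal_block_collapsible famP ix) => [y | j jx]; first exact: x_leftmost.
  by apply: i_first; rewrite mem_filter mem_enum jx.
apply: IH; first exact: leq_trans (size_filter_neq ix) le_Ln.
exact: in_C_equiv_fam_remove.
Qed.

Theorem theorem3 (d : nat) (hd : 1 <= d) (P : pt d -> Prop)
  (I : finType) (C : I -> pt d -> Prop)
  (hinj : injective C)
  (hC : forall i, in_C_equiv P (C i)) :
  d_collapsible (2 * d - 1) (nerve C).
Proof.
have [Q [L [famL ->]]] := nerve_witnesses C (R0, Ordinal hd).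
apply: (fam_collapsible (P := fun p => P p /\ Q p)) => j.
by apply: eq_in_C_equiv (in_C_equiv_restrict Q (hC j)) => p; rewrite famL.
Qed.
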